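(* Let $p$ be an odd prime, $k$ algebraically closed of characteristic $p$, $d=p^2-1$, and let $X$ be the Artin–Schreier curve $y^p-y=-x^{d}-x^{d/2}$ over $k$. For every $\alpha=y^mx^ndx\in\mathcal B_X$ with $m\ge\frac{p-1}{2}$, we have $\mathcal C_X(\alpha)\notin\operatorname{Span}(\mathcal C_X(\mathcal B_\alpha))$.
   Context: $\mathcal C_X$ is the Cartier operator on $H^0(X,\Omega^1_X)$: the $p^{-1}$-semilinear map with $\mathcal C_X(f^p\alpha+\beta)=f\,\mathcal C_X(\alpha)+\mathcal C_X(\beta)$, $\mathcal C_X(x^{p-1}dx)=dx$, $\mathcal C_X(x^ndx)=0$ for $n\not\equiv-1\pmod p$. For an Artin–Schreier curve $y^p-y=f$ with $f\in k[x]$ of degree $D$ prime to $p$, the set $$\mathcal B_X=\left\{y^ix^jdx:\ 0\le i\le p-2,\ 0\le j\le \left\lceil\tfrac{(p-i-1)D}{p}\right\rceil-2\right\}$$ is a $k$-basis of $H^0(X,\Omega^1_X)$. Order $\mathcal B_X$ lexicographically with $y>x$: $y^ix^jdx>y^ax^bdx$ iff $i>a$, or $i=a$ and $j>b$. For $\alpha\in\mathcal B_X$, $\mathcal B_\alpha=\{\beta\in\mathcal B_X:\beta<\alpha\}$, and for a set $A$ of differentials, $\operatorname{Span}(\mathcal C_X(A))$ is the $k$-span of $\{\mathcal C_X(a):a\in A\}$. *)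

From mathcomp Require Import all_boot all_order all_algebra.
Set Implicit Arguments. Unset Strict Implicit. Unset Printing Implicit Defensive.
Import GRing.Theory.
Local Open Scope ring_scope.

(* The Artin-Schreier curve X : y^p - y = f(x), f = -x^d - x^(d/2), d = p^2-1.
   Regular differentials h dx are represented by h in the coordinate ring
   A = k[x][y]/(y^p - y - f), which is free over k[x] with basis 1,y,..,y^(p-1);
   we represent h by its unique representative in {poly {poly k}}
   (outer variable y, inner variable x) of y-degree < p.  The monomial
   y^t x^q is  ('X^q)%:P * 'X^t. *)

Section AS.
Variable k : fieldType.
Variable p : nat.

Definition ASd : nat := (p ^ 2 - 1)%N.

Definition ASf : {poly k} := - 'X^ASd - 'X^(ASd %/ 2).

(* Cartier operator on k[x] dx for polynomials with coefficients in the
   prime field F_p (so that the p^(-1)-semilinearity is invisible):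
   C(sum_n c_n x^n dx) = sum_q c_(pq+p-1) x^q dx, which is exactly what the
   rules C(x^(p-1) dx) = dx, C(x^n dx) = 0 for n <> -1 mod p and
   C(g^p a + b) = g C(a) + C(b) give. *)
Definition cartier_x (g : {poly k}) : {poly k} :=
  \poly_(q < size g) g`_(p * q + (p - 1)).

(* Cartier operator of X on the monomial differential y^i x^j dx:
   write y = y^p - f, so y^i = sum_t binom(i,t) (y^t)^p (-f)^(i-t), hence
   C(y^i x^j dx) = sum_t binom(i,t) y^t C((-f)^(i-t) x^j dx)
   (binomials and the coefficients of f lie in F_p). *)
Definition cartier (i j : nat) : {poly {poly k}} :=
  \sum_(t < i.+1)
     ((('C(i, t))%:R *: cartier_x ((- ASf) ^+ (i - t) * 'X^j))%:P * 'X^t).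

Definition inB (i j : nat) : bool :=
  (i <= p - 2)%N && (j + 2 <= ((p - i - 1) * ASd + p - 1) %/ p)%N.

Definition lexlt (a b m n : nat) : bool :=
  (a < m)%N || ((a == m) && (b < n)%N).

(* C(y^m x^n dx) lies in the k-span of C(B_alpha), alpha = y^m x^n dx.
   (Every element of B_X has i < p and j < p^2, so the sum ranges over
   all of B_alpha.) *)
Definition in_span_C_below (m n : nat) : Prop :=
  exists c : nat -> nat -> k,
    cartier m n =
    \sum_(a < p) \sum_(b < p ^ 2)
       (if inB a b && lexlt a b m n then (c a b)%:P%:P * cartier a b else 0).

End AS.

From mathcomp Require Import all_boot all_order all_algebra.
From mathcomp Require Import zify.
Import GRing.Theory.

Set Implicit Arguments.
Unset Strict Implicit.
Unset Printing Implicit Defensive.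

(* Write p = 2w + 1 and d = 2h, so that h = 2w(w + 1) and -f = x^h + x^(2h).
   Then (-f)^s = sum_l binom(s, l) x^(h(s + l)), and the coefficient of y^t x^q in
   C(y^i x^j dx) is binom(i, t) sum_l binom(i - t, l) [pq + p - 1 = h(i - t + l) + j].
   For alpha = y^m x^n dx let r = 2(n + 1) mod p, s = ceil(r/2), t = m - s, and
   pick q with pq + p - 1 = hr + n (possible since 2h = -1 mod p).  The monomial
   y^t x^q occurs in C(alpha) with coefficient binom(m, t) binom(s, r - s), which
   is prime to p, whereas the degree bounds of B_X rule out
   h(a - t + l) + b = hr + n for every y^a x^b dx < alpha in B_X: in the row
   a = m because n < h, and in lower rows because the y-degree lost forces an
   x-degree above the bound of B_X.  So no C(beta), beta < alpha, contains
   y^t x^q. *)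

Lemma prime_ndvd_fact p a : prime p -> a < p -> ~~ (p %| a`!).
Proof.
move=> p_pr; elim: a => [|a IHa] ltap; first by rewrite dvdn1 neq_ltn prime_gt1 ?orbT.
by rewrite factS Euclid_dvdM // negb_or IHa 1?ltnW // andbT gtnNdvd.
Qed.

Lemma prime_ndvd_bin p a b : prime p -> a < p -> b <= a -> ~~ (p %| 'C(a, b)).
Proof.
move=> p_pr ltap leba; have := prime_ndvd_fact p_pr ltap.
by rewrite -(bin_fact leba); apply: contra => /dvdn_mulr->.
Qed.

Lemma inB_bound p i j :
  0 < p -> inB p i j -> (i <= p - 2) && (j + 2 <= p * (p - 1 - i)).
Proof.
move=> p_gt0 /andP[le_ip2]; rewrite le_ip2.
have -> : (p - i - 1) * ASd p + p - 1 = p * (p * (p - 1 - i)) + i.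
  by rewrite /ASd; nia.
by rewrite mulnC divnMDl // divn_small ?addn0 //; lia.
Qed.

Lemma lower_row_gap w u delta : 0 < w -> 2 <= delta -> 2 * u <= delta + 1 ->
  (2 * w + 1) * (w + u) <= 2 * w * (w + 1) * delta.
Proof. nia. Qed.

Lemma lower_row_exponent_neq w m n a b r s t e l :
  0 < w -> w <= m -> a < m -> b + 2 <= (2 * w + 1) * (2 * w - a) ->
  s.*2 = odd r + r -> (odd r -> w <= n) -> t + s = m -> a = t + e -> l <= e ->
  2 * w * (w + 1) * (e + l) + b != 2 * w * (w + 1) * r + n.
Proof.
set h := 2 * w * (w + 1) => w_gt0 le_wm lt_am le_b double_s le_wn_of_odd def_m def_a le_le.
have le_sigma : e + l + 2 * (m - a) <= r + 1.
  by move: double_s; rewrite -muln2; case: odd => /=; lia.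
set delta := r - (e + l).
apply/eqP => E.
have def_b : b = h * delta + n.
  rewrite (_ : r = e + l + delta) in E; last by rewrite /delta; lia.
  by rewrite mulnDr in E; lia.
have le_b' : b + 2 <= (2 * w + 1) * (w + (m - a)).
  by apply: leq_trans le_b _; rewrite leq_mul2l; lia.
have [delta_eq1 | delta_ne1] := eqVneq delta 1.
  have /le_wn_of_odd le_wn : odd r.
    by move: double_s; rewrite -muln2; case: odd => //=; rewrite /delta in delta_eq1; lia.
  have : (2 * w + 1) * (w + (m - a)) = h + w + 1 by rewrite /h (_ : m - a = 1); [nia | lia].
  lia.
have : (2 * w + 1) * (w + (m - a)) <= h * delta.
  by apply: lower_row_gap; rewrite /delta in delta_ne1 *; lia.
lia.
Qed.

Lemma same_row_exponent_neq w m n b x y :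
  w <= m -> n + 2 <= (2 * w + 1) * (2 * w - m) -> b < n ->
  2 * w * (w + 1) * x + b != 2 * w * (w + 1) * y + n.
Proof.
set h := 2 * w * (w + 1) => le_wm le_n lt_bn.
have lt_nh : n < h.
  have : (2 * w + 1) * (2 * w - m) <= (2 * w + 1) * w by rewrite leq_mul2l; lia.
  by rewrite /h; nia.
apply/eqP => /(congr1 (modn^~ h)).
rewrite ![h * _]mulnC !modnMDl !modn_small ?(ltn_trans lt_bn) //.
by apply/eqP; rewrite neq_ltn lt_bn.
Qed.

Local Open Scope ring_scope.

Section CartierCoefficients.
Variables (k : fieldType) (p : nat).
Hypothesis p_odd : odd p.

Definition halfASd : nat := ASd p %/ 2.
Let h := halfASd.

Lemma ASd_half : ASd p = (h * 2)%N.
Proof. by rewrite /h /halfASd divnK // dvdn2 /ASd oddB ?oddX ?p_odd // expn_gt0 odd_gt0. Qed.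

Lemma oppASfE : - ASf k p = 'X^h + 'X^(ASd p).
Proof. by rewrite /ASf opprD !opprK addrC. Qed.

Lemma coef_oppASf_expXn s j e : ((- ASf k p) ^+ s * 'X^j)`_e =
  \sum_(l < s.+1) ('C(s, l) * (e == h * (s + l) + j))%N%:R.
Proof.
rewrite oppASfE exprDn mulr_suml coef_sum; apply: eq_bigr => l _.
rewrite -!exprM -exprD mulrnAl -exprD coefMn coefXn natrM mulr_natl ASd_half.
have /ltnSE le_ls := ltn_ord l.
by congr ((e == _)%:R *+ _); nia.
Qed.

Lemma coef_cartier_x (g : {poly k}) q : (cartier_x p g)`_q = g`_(p * q + (p - 1)).
Proof.
rewrite coef_poly; case: ltnP => // le_gq; rewrite nth_default //.
by apply: leq_trans le_gq _; have := odd_gt0 p_odd; nia.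
Qed.

Lemma coef_cartier i j t q : ((cartier k p i j)`_t)`_q =
  if (t <= i)%N then
    'C(i, t)%:R * \sum_(l < (i - t).+1)
                    ('C(i - t, l) * (p * q + (p - 1) == h * (i - t + l) + j))%N%:R
  else 0.
Proof.
rewrite /cartier !coef_sum.
under eq_bigr => u _ do rewrite coefCM coefXn.
case: leqP => [le_ti | lt_it].
  rewrite (bigD1 (Ordinal (le_ti : (t < i.+1)%N))) //= eqxx mulr1 big1 ?addr0.
    by rewrite coefZ coef_cartier_x coef_oppASf_expXn.
  move=> u /negbTE ne_ut; rewrite -val_eqE /= in ne_ut.
  by rewrite eq_sym ne_ut mulr0 coef0.
rewrite big1 ?coef0 // => u _.
by rewrite gtn_eqF ?mulr0 ?coef0 // (leq_trans (ltn_ord u) lt_it).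
Qed.

End CartierCoefficients.

Section LeadingMonomial.
Variables (k : fieldType) (p m n : nat).
Hypotheses (p_prime : prime p) (p_odd : odd p) (p_char : p \in [pchar k]).
Hypotheses (le_half_m : ((p - 1)./2 <= m)%N) (alpha_in_B : inB p m n).

Let w := p./2.
Let h := halfASd p.
Definition lead_rem : nat := (2 * n.+1) %% p.
Definition lead_xdeg : nat := (h * lead_rem + n).+1 %/ p - 1.

Let s := uphalf lead_rem.
Let t0 := (m - s)%N.

Let p_eq : p = (2 * w + 1)%N.
Proof. by have := odd_double_half p; rewrite p_odd -muln2; lia. Qed.

Let h_eq : h = (2 * w * (w + 1))%N.
Proof.
apply/eqP; rewrite -(eqn_pmul2r (isT : 0 < 2)%N) -ASd_half // /ASd p_eq.
by apply/eqP; nia.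
Qed.

Let inB_boundE i j :
  inB p i j -> (i <= p - 2)%N && (j + 2 <= (2 * w + 1) * (2 * w - i))%N.
Proof. by move/(inB_bound (odd_gt0 p_odd)); rewrite {2 3}p_eq addnK. Qed.

Let le_wm : (w <= m)%N.
Proof. by move: le_half_m; rewrite p_eq addnK mul2n doubleK. Qed.

Let w_gt0 : (0 < w)%N.
Proof.
have /andP[_] := inB_boundE alpha_in_B.
by rewrite lt0n; apply: contraTneq => ->; lia.
Qed.

Let le_s_m : (s <= m)%N.
Proof.
have lt_rp : (lead_rem < p)%N by rewrite ltn_pmod // odd_gt0.
by apply: leq_trans le_wm; rewrite leq_uphalf_double -mul2n; lia.
Qed.

Let le_s_r : (s <= lead_rem)%N.
Proof. by have := uphalfK lead_rem; rewrite -/s -muln2; case: odd => /=; lia. Qed.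

Let le_rs_s : (lead_rem - s <= s)%N.
Proof. by have := uphalfK lead_rem; rewrite -/s -muln2; case: odd => /=; lia. Qed.

Let le_wn_of_odd_rem : odd lead_rem -> (w <= n)%N.
Proof.
apply: contraTT; rewrite -ltnNge => lt_nw.
by rewrite /lead_rem modn_small ?oddM // p_eq; lia.
Qed.

Let lead_xdegE : (p * lead_xdeg + (p - 1) = h * lead_rem + n)%N.
Proof.
have dvd_p : (p %| (h * lead_rem + n).+1)%N.
  have := divn_eq (2 * n.+1) p; rewrite -/lead_rem; set c := (_ %/ p)%N => def_n.
  rewrite -(@Gauss_dvdr p 2) ?coprimen2 ?p_odd //.
  have -> : (2 * (h * lead_rem + n).+1 = p * (p * lead_rem + c))%N.
    by rewrite h_eq; rewrite p_eq in def_n *; nia.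
  exact: dvdn_mulr.
have le_p := dvdn_leq (ltn0Sn _) dvd_p.
by rewrite /lead_xdeg mulnBr mulnC divnK //; lia.
Qed.

Lemma coef_cartier_lead :
  ((cartier k p m n)`_t0)`_lead_xdeg = ('C(m, t0) * 'C(s, lead_rem - s))%N%:R.
Proof.
rewrite coef_cartier // leq_subr subKn // lead_xdegE -/h.
rewrite (bigD1 (Ordinal (le_rs_s : (lead_rem - s < s.+1)%N))) //= big1 ?addr0 => [|l ne_l].
  by rewrite subnKC // eqxx muln1 natrM.
rewrite eqn_add2r eqn_pmul2l; last by rewrite h_eq !muln_gt0 w_gt0 addn1.
rewrite (_ : (lead_rem == s + l)%N = false) ?muln0 //; apply: contraNF ne_l => /eqP def_r.
by rewrite -val_eqE /= def_r addKn.
Qed.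

Lemma coef_cartier_below a b :
  inB p a b -> lexlt a b m n -> ((cartier k p a b)`_t0)`_lead_xdeg = 0.
Proof.
move=> beta_in_B lt_beta; rewrite coef_cartier //; case: ifP => // le_ta.
rewrite big1 ?mulr0 // => -[l /= lt_l] _; rewrite lead_xdegE -/h.
suff /negbTE-> : (h * lead_rem + n != h * (a - t0 + l) + b)%N by rewrite muln0.
rewrite eq_sym h_eq; have /andP[_ le_b] := inB_boundE beta_in_B.
case/orP: lt_beta => [lt_am | /andP[/eqP-> lt_bn]].
  apply: lower_row_exponent_neq w_gt0 le_wm lt_am le_b (uphalfK _) le_wn_of_odd_rem _ _ _.
  - exact: subnK.
  - by rewrite subnKC.
  - by rewrite -ltnS.
have /andP[_ le_n] := inB_boundE alpha_in_B.
exact: same_row_exponent_neq le_wm le_n lt_bn.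
Qed.

Lemma cartier_new_monomial : exists t q, ((cartier k p m n)`_t)`_q != 0 /\
  forall a b, inB p a b -> lexlt a b m n -> ((cartier k p a b)`_t)`_q = 0.
Proof.
exists t0, lead_xdeg; split; last exact: coef_cartier_below.
have lt_mp : (m < p)%N by have /andP[le_m _] := inB_boundE alpha_in_B; rewrite p_eq; lia.
rewrite coef_cartier_lead -(dvdn_pcharf p_char) Euclid_dvdM // negb_or.
by rewrite !prime_ndvd_bin // ?leq_subr // (leq_ltn_trans le_s_m).
Qed.

End LeadingMonomial.

Theorem mainTheorem9 (k : closedFieldType) (p : nat)
  (hp : prime p) (hodd : odd p) (hchar : p \in [pchar k])
  (m n : nat) (hB : inB p m n) (hm : ((p - 1)./2 <= m)%N) :
  ~ @in_span_C_below k p m n.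
Proof.
have [t [q [alpha_tq below_tq]]] := cartier_new_monomial hp hodd hchar hm hB.
case=> c def_alpha; move/negP: alpha_tq; apply.
rewrite def_alpha !coef_sum big1 // => a _.
rewrite !coef_sum big1 // => b _.
case: ifP => [/andP[beta_in_B lt_beta] | _]; last by rewrite !coef0.
by rewrite !coefCM below_tq ?mulr0.
Qed.
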